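(* Let $\mu^\ast$ be an upper quasi-density on $\mathbb{H}$, let $X\subseteq Y\subseteq\mathbb{H}$ with $\mu^\ast(X)<\mu^\ast(Y)$, and let $\xi$ be a real number with $\mu^\ast(X)<\xi<\mu^\ast(Y)$. Then there exist sequences $(A_n)_{n\ge1}$, $(B_n)_{n\ge1}$ of subsets of $\mathbb{H}$ such that: (i) $X\subseteq A_1\subseteq A_2\subseteq\cdots\subseteq A_n\subseteq\cdots\subseteq B_n\subseteq\cdots\subseteq B_2\subseteq B_1\subseteq Y$; (ii) $\mu^\ast(A_n)<\xi\le\mu^\ast(B_n)$ for all $n\in\mathbb{N}^+$; (iii) for each $n\in\mathbb{N}^+$ there exist $h,k\in\mathbb{N}$ with $k\ge n$ and $B_n\setminus A_n\subseteq k\cdot\mathbb{H}+h$.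
   Context: $\mathbb{N}=\{0,1,2,\dots\}$, $\mathbb{N}^+=\{1,2,\dots\}$; $\mathbb{H}$ is one of $\mathbb{Z},\mathbb{N},\mathbb{N}^+$. For $X\subseteq\mathbb{H}$, $k\in\mathbb{N}^+$, $h\in\mathbb{N}$, $k\cdot X+h:=\{kx+h:x\in X\}$. An upper quasi-density on $\mathbb{H}$ is a function $\mu^\ast:\mathcal{P}(\mathbb{H})\to\mathbb{R}$ with $\mu^\ast(\mathbb{H})=1$, $\mu^\ast(X)\le1$ for all $X$, $\mu^\ast(X\cup Y)\le\mu^\ast(X)+\mu^\ast(Y)$ for all $X,Y$, and $\mu^\ast(k\cdot X+h)=\frac1k\mu^\ast(X)$ for all $X\subseteq\mathbb{H}$, $h,k\in\mathbb{N}^+$. *)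

From Stdlib Require Import Reals ZArith.
Open Scope R_scope.

(* The three choices of the ambient set H, all viewed inside Z. *)
Inductive Hkind := HZ | HN | HNpos.

Definition inH (H : Hkind) (z : Z) : Prop :=
  match H with
  | HZ => True
  | HN => (0 <= z)%Z
  | HNpos => (0 < z)%Z
  end.

Definition subH (H : Hkind) (X : Z -> Prop) : Prop := forall z, X z -> inH H z.

Definition incl (X Y : Z -> Prop) : Prop := forall z, X z -> Y z.

Definition union (X Y : Z -> Prop) : Z -> Prop := fun z => X z \/ Y z.

Definition setminus (X Y : Z -> Prop) : Z -> Prop := fun z => X z /\ ~ Y z.

Definition dil (k h : Z) (X : Z -> Prop) : Z -> Prop :=
  fun z => exists x, X x /\ z = (k * x + h)%Z.

(* Upper quasi-density on H (values on subsets of H only matter). *)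
Definition upper_quasi_density (H : Hkind) (mu : (Z -> Prop) -> R) : Prop :=
  mu (inH H) = 1 /\
  (forall X, subH H X -> mu X <= 1) /\
  (forall X Y, subH H X -> subH H Y -> mu (union X Y) <= mu X + mu Y) /\
  (forall X h k, subH H X -> (0 < h)%Z -> (0 < k)%Z ->
     mu (dil k h X) = / IZR k * mu X).

(* Singletons are null for an upper quasi-density (a singleton is both a translate and a dilate
   of another one), so finitely many points can be added to a set without increasing its
   density.  Given A ⊆ B with mu A < xi <= mu B and a modulus k, first add to A the finitely
   many points of B in (0, k), then add the points of B residue class by residue class mod k;
   at the class where the density first reaches xi, the last two sets differ by a subset of a
   single class k·H + h.  Iterating with k = 1, 2, 3, ... by dependent choice gives the
   sequences. *)
From Stdlib Require Import Reals ZArith Lia Lra.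
From Stdlib Require Import FunctionalExtensionality PropExtensionality ClassicalEpsilon Classical.
Open Scope R_scope.

Lemma pred_ext (P Q : Z -> Prop) : (forall z, P z <-> Q z) -> P = Q.
Proof.
  intros E; apply functional_extensionality; intros z; apply propositional_extensionality; auto.
Qed.

Lemma dil_singleton k h c : dil k h (fun w => w = c) = (fun w => w = (k * c + h)%Z).
Proof.
  apply pred_ext; intros z; split.
  - intros [x [-> ->]]; reflexivity.
  - intros ->; exists c; auto.
Qed.

Lemma dil_empty k h : dil k h (fun _ => False) = (fun _ => False).
Proof. apply pred_ext; intros z; split; [intros [x [[] _]] | intros []]. Qed.

Lemma inH_1 H : inH H 1%Z.
Proof. destruct H; simpl; lia. Qed.

Lemma dil_residue H (k w : Z) :
  (0 < k)%Z -> inH H w -> ~ (0 < w < k)%Z -> dil k (w mod k) (inH H) w.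
Proof.
  intros Hk Hw Hsmall; exists (w / k)%Z; split; [|apply Z.div_mod; lia].
  destruct H; simpl in *; auto.
  - apply Z.div_pos; lia.
  - apply Z.div_str_pos; lia.
Qed.

Lemma discrete_crossing (f : nat -> R) xi k :
  f 0%nat < xi -> xi <= f k -> exists j, (j < k)%nat /\ f j < xi <= f (S j).
Proof.
  induction k as [|k IH]; intros H0 Hk; [lra|].
  destruct (Rlt_or_le (f k) xi) as [Hl|Hl].
  - exists k; repeat split; auto.
  - destruct (IH H0 Hl) as [j [? ?]]; exists j; split; [lia|auto].
Qed.

Lemma dependent_choice_seq (T : Type) (P : T -> Prop) (Rel : nat -> T -> T -> Prop) (x0 : T) :
  P x0 -> (forall n x, P x -> exists y, P y /\ Rel n x y) ->
  exists f : nat -> T, f 0%nat = x0 /\ forall n, P (f n) /\ Rel n (f n) (f (S n)).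
Proof.
  intros P0 Hstep.
  set (next n x := epsilon (inhabits x0) (fun y => P y /\ Rel n x y)).
  set (f := nat_rect (fun _ => T) x0 next).
  assert (Hnext : forall n x, P x -> P (next n x) /\ Rel n x (next n x)).
  { intros n x Px; apply (epsilon_spec (inhabits x0) (fun y => P y /\ Rel n x y)), Hstep, Px. }
  assert (Pf : forall n, P (f n)) by (induction n; [exact P0 | apply Hnext, IHn]).
  exists f; split; [reflexivity|].
  intros n; split; [apply Pf | apply (Hnext n (f n) (Pf n))].
Qed.

Section UpperQuasiDensity.

Variables (H : Hkind) (mu : (Z -> Prop) -> R).
Hypothesis Hmu : upper_quasi_density H mu.

Lemma uqd_empty : mu (fun _ => False) = 0.
Proof.
  destruct Hmu as [_ [_ [_ Hdil]]].
  pose proof (Hdil (fun _ => False) 1%Z 2%Z ltac:(intros z [])) as E.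
  rewrite dil_empty in E; specialize (E ltac:(lia) ltac:(lia)); simpl in E; lra.
Qed.

Lemma uqd_singleton z : inH H z -> mu (fun w => w = z) = 0.
Proof.
  destruct Hmu as [_ [_ [_ Hdil]]].
  assert (S1 : subH H (fun w => w = 1%Z)) by (intros w ->; apply inH_1).
  assert (mu1 : mu (fun w => w = 1%Z) = 0).
  { (* {3} = 2·{1} + 1 = 1·{1} + 2 *)
    pose proof (Hdil _ 1%Z 2%Z S1 ltac:(lia) ltac:(lia)) as E1.
    pose proof (Hdil _ 2%Z 1%Z S1 ltac:(lia) ltac:(lia)) as E2.
    rewrite dil_singleton in E1, E2; simpl in E1, E2.
    rewrite E2, Rinv_1 in E1; lra. }
  intros Hz.
  destruct (Z_lt_le_dec 1 z) as [Hlt|Hle].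
  - pose proof (Hdil _ (z - 1)%Z 1%Z S1 ltac:(lia) ltac:(lia)) as E.
    rewrite dil_singleton, mu1 in E; replace (1 * 1 + (z - 1))%Z with z in E by lia; lra.
  - destruct (Z.eq_dec z 1) as [->|Hne]; [exact mu1|].
    assert (Sz : subH H (fun w => w = z)) by (intros w ->; exact Hz).
    pose proof (Hdil _ (1 - z)%Z 1%Z Sz ltac:(lia) ltac:(lia)) as E.
    rewrite dil_singleton, Rinv_1 in E; replace (1 * z + (1 - z))%Z with 1%Z in E by lia; lra.
Qed.

Lemma uqd_subsingleton (N : Z -> Prop) :
  subH H N -> (forall x y, N x -> N y -> x = y) -> mu N = 0.
Proof.
  intros SN Huniq.
  destruct (classic (exists z, N z)) as [[z Nz]|Hnone].
  - replace N with (fun w => w = z) by (apply pred_ext; intros w; split;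
      [intros ->; exact Nz | intros Nw; exact (Huniq w z Nw Nz)]).
    apply uqd_singleton, SN, Nz.
  - replace N with (fun _ : Z => False) by (apply pred_ext; intros w; split;
      [intros [] | intros Nw; apply Hnone; exists w; exact Nw]).
    apply uqd_empty.
Qed.

Lemma uqd_union_null (A N : Z -> Prop) :
  subH H A -> subH H N -> mu N = 0 -> mu (union A N) <= mu A.
Proof.
  intros SA SN HN; destruct Hmu as [_ [_ [Hsub _]]].
  pose proof (Hsub A N SA SN); lra.
Qed.

Lemma uqd_add_initial_segment (A B : Z -> Prop) (m : nat) :
  subH H A -> subH H B -> mu (fun w => A w \/ (B w /\ (0 < w < Z.of_nat m)%Z)) <= mu A.
Proof.
  intros SA SB; induction m as [|m IH].
  - replace (fun w => _) with A; [lra|].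
    apply pred_ext; intros z; simpl; split; [auto | intros [?|[_ ?]]; auto; lia].
  - set (Sm := fun w => A w \/ (B w /\ (0 < w < Z.of_nat m)%Z)) in IH.
    set (Nm := fun w => w = Z.of_nat m /\ B w /\ (0 < w)%Z).
    replace (fun w => _) with (union Sm Nm).
    + assert (mu (union Sm Nm) <= mu Sm); [|lra].
      apply uqd_union_null.
      * intros z [Az|[Bz _]]; auto.
      * intros z [_ [Bz _]]; auto.
      * apply uqd_subsingleton; [intros z [_ [Bz _]]; auto | intros x y [-> _] [-> _]; reflexivity].
    + apply pred_ext; intros z; unfold union, Sm, Nm; split.
      * intros [[Az|[Bz Hz]]|[-> [Bz Hz]]]; [left | right; split; [|lia] ..]; auto.
      * intros [Az|[Bz Hz]]; [left; left; exact Az|].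
        destruct (Z.eq_dec z (Z.of_nat m)); [right | left; right]; repeat split; auto; lia.
Qed.

Lemma uqd_refine xi (A B : Z -> Prop) (k : Z) :
  (0 < k)%Z -> subH H B -> incl A B -> mu A < xi <= mu B ->
  exists A' B', incl A A' /\ incl A' B' /\ incl B' B /\ mu A' < xi <= mu B' /\
    exists h, (0 <= h)%Z /\ incl (setminus B' A') (dil k h (inH H)).
Proof.
  intros Hk SB AB [HA HB].
  set (A0 := fun w => A w \/ (B w /\ (0 < w < k)%Z)).
  set (layer j w := A0 w \/ (B w /\ ~ (0 < w < k)%Z /\ (w mod k < Z.of_nat j)%Z)).
  assert (HA0 : mu A0 <= mu A).
  { pose proof (uqd_add_initial_segment A B (Z.to_nat k) (fun z Az => SB z (AB z Az)) SB) as E.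
    rewrite Z2Nat.id in E by lia; exact E. }
  assert (layer0 : layer 0%nat = A0).
  { apply pred_ext; intros z; unfold layer; split; [|auto].
    intros [?|[_ [_ ?]]]; auto; pose proof (Z.mod_pos_bound z k Hk); simpl in *; lia. }
  assert (layer_last : layer (Z.to_nat k) = B).
  { apply pred_ext; intros z; unfold layer, A0; split.
    - intros [[?|[? _]]|[? _]]; auto.
    - intros Bz; destruct (classic (0 < z < k)%Z); [left; right; auto|].
      right; repeat split; auto; pose proof (Z.mod_pos_bound z k Hk); lia. }
  destruct (discrete_crossing (fun j => mu (layer j)) xi (Z.to_nat k)) as [j [_ Hj]];
    [simpl; rewrite layer0; lra | simpl; rewrite layer_last; lra |].
  exists (layer j), (layer (S j)); repeat split; try apply Hj.
  - intros z Az; left; left; exact Az.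
  - intros z [?|[? [? ?]]]; [left | right; repeat split]; auto; lia.
  - intros z [[?|[? _]]|[? _]]; auto.
  - exists (Z.of_nat j); split; [lia|].
    intros z [[?|[Bz [Hbig Hres]]] Hnot]; [exfalso; apply Hnot; left; auto|].
    assert (Hmod : (z mod k = Z.of_nat j)%Z).
    { destruct (Z.eq_dec (z mod k) (Z.of_nat j)); auto.
      exfalso; apply Hnot; right; repeat split; auto; lia. }
    rewrite <- Hmod; apply dil_residue; auto.
Qed.

End UpperQuasiDensity.

Theorem mainTheorem9 (H : Hkind) (mu : (Z -> Prop) -> R)
  (Hmu : upper_quasi_density H mu)
  (X Y : Z -> Prop) (HXY : incl X Y) (HY : subH H Y)
  (Hlt : mu X < mu Y) (xi : R) (Hxi1 : mu X < xi) (Hxi2 : xi < mu Y) :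
  exists A B : nat -> (Z -> Prop),
    (* (i) *)
    incl X (A 1%nat) /\
    (forall n, (1 <= n)%nat -> incl (A n) (A (S n))) /\
    (forall n, (1 <= n)%nat -> incl (A n) (B n)) /\
    (forall n, (1 <= n)%nat -> incl (B (S n)) (B n)) /\
    incl (B 1%nat) Y /\
    (* (ii) *)
    (forall n, (1 <= n)%nat -> mu (A n) < xi <= mu (B n)) /\
    (* (iii) *)
    (forall n, (1 <= n)%nat ->
       exists h k : Z, (0 <= h)%Z /\ (0 <= k)%Z /\ (Z.of_nat n <= k)%Z /\
         incl (setminus (B n) (A n)) (dil k h (inH H))).
Proof.
  set (Good (p : (Z -> Prop) * (Z -> Prop)) :=
    incl (fst p) (snd p) /\ incl (snd p) Y /\ mu (fst p) < xi <= mu (snd p)).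
  set (Refines n (p q : (Z -> Prop) * (Z -> Prop)) :=
    incl (fst p) (fst q) /\ incl (snd q) (snd p) /\ exists h, (0 <= h)%Z /\
      incl (setminus (snd q) (fst q)) (dil (Z.of_nat (S n)) h (inH H))).
  destruct (dependent_choice_seq _ Good Refines (X, Y)) as [f [f0 Hf]].
  - unfold Good; simpl; repeat split; [exact HXY | intros z Yz; exact Yz | lra | lra].
  - intros n [A B] [AB [BY HAB]]; simpl in *.
    destruct (uqd_refine H mu Hmu xi A B (Z.of_nat (S n)) ltac:(lia)
                (fun z Bz => HY z (BY z Bz)) AB HAB)
      as [A' [B' [AA' [A'B' [B'B [HA'B' Hh]]]]]].
    exists (A', B'); split.
    + split; [exact A'B' | split; [intros z Bz; apply BY, B'B, Bz | exact HA'B']].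
    + split; [exact AA' | split; [exact B'B | exact Hh]].
  - exists (fun n => fst (f n)), (fun n => snd (f n)).
    split; [|split; [|split; [|split; [|split; [|split]]]]].
    + destruct (Hf 0%nat) as [_ [Hstart _]]; rewrite f0 in Hstart; exact Hstart.
    + intros n _; apply Hf.
    + intros n _; apply Hf.
    + intros n _; apply Hf.
    + apply (Hf 1%nat).
    + intros n _; apply Hf.
    + intros [|m] Hn; [lia|].
      destruct (Hf m) as [_ [_ [_ [h [Hh Hincl]]]]].
      exists h, (Z.of_nat (S m)); repeat split; auto; lia.
Qed.
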